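(* Fix a cell with no source term ($S=0$) and total energy $E=1$, and a positive integer $N_{obj}$. Start from a finite population of $N^0\ge1$ particles with positive weights summing to $1$, and apply repeatedly (with fresh independent uniform random variables at each iteration) the cell-based population control step with non-conservative splitting described in the context, each time to the population produced by the previous iteration. Let $N^l$ be the number of particles in the cell after the $l$-th iteration. Then $\lim_{l\to\infty}\mathbb{P}(N^l=N_{obj})=1$; more precisely, there exists $\lambda>0$ such that $\mathbb{P}(N^l\neq N_{obj})\le e^{-l\lambda}$ for all $l$.
   Context: Cell-based population control step for a single cell. Input: a finite collection of existing particles with positive weights $w_1,\dots,w_N$, their total energy $E=\sum_p w_p$, a source energy $S\ge0$, and a positive integer $N_{obj}$, with $E+S>0$. (1) Set $w_{obj}=(E+S)/N_{obj}$. (2) If $S>0$, emit $N^{vol}=\max(1,\lfloor S/w_{obj}\rfloor)$ particles of weight $S/N^{vol}$; otherwise none. (3) If $E>0$, for each existing particle $p$ draw independently $u_p\sim\mathcal U(0,1)$, set $I_p=\lfloor w_p/w_{obj}\rfloor$, $R_p=w_p/w_{obj}-I_p$. If $I_p=0$ (Russian Roulette): the particle is killed if $R_p<u_p$, otherwise its weight becomes $w_{obj}$. If $I_p\ge1$ (Splitting): with $N^{split}_p=I_p+\mathbf 1_{\{u_p<R_p\}}$, the particle is replaced by $N^{split}_p$ copies each of weight $w_{obj}$ (non-conservative splitting). (4) Renormalization: multiply all particle weights by $c=(E+S)/(\text{total weight after (2)-(3)})$. (5) Non-void correction: if $S=0$ and no particle remains after (3), the population becomes a single particle of weight $E$. 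*)

From HB Require Import structures.
From mathcomp Require Import all_boot all_order all_algebra.
From mathcomp Require Import all_classical all_reals all_analysis.
Set Implicit Arguments. Unset Strict Implicit. Unset Printing Implicit Defensive.
Import Order.TTheory GRing.Theory Num.Theory.
Local Open Scope classical_set_scope.
Local Open Scope ring_scope.

Section PopulationControl.
Variable R : realType.

(* Treatment of one existing particle of weight w, with uniform draw u,
   for target weight wobj (step (3)): Russian roulette if I = 0,
   non-conservative splitting if I >= 1.  For w/wobj >= 0,
   truncn (w / wobj) is the floor of w / wobj. *)
Definition pc_particle (wobj w u : R) : seq R :=
  let I := Num.truncn (w / wobj) in
  let Rp := w / wobj - I%:R in
  if I == 0%N then (if Rp < u then [::] else [:: wobj])
  else nseq (I + nat_of_bool (u < Rp)%R)%N wobj.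

(* The cell-based population control step (1)-(5).
   ws : existing particle weights (particle p = ws`_p), S : source energy,
   u p : the uniform draw attached to particle p. *)
Definition pc_step (Nobj : nat) (S : R) (u : nat -> R) (ws : seq R) : seq R :=
  let E := \sum_(w <- ws) w in
  let wobj := (E + S) / Nobj%:R in
  let Nvol := maxn 1 (Num.truncn (S / wobj)) in
  let vol := if 0 < S then nseq Nvol (S / Nvol%:R) else [::] in
  let ex := if 0 < E then
              flatten [seq pc_particle wobj (nth 0 ws p) (u p) | p <- iota 0 (size ws)]
            else [::] in
  let pop := vol ++ ex in
  let tot := \sum_(w <- pop) w in
  if (S == 0) && (pop == [::]) then [:: E]
  else [seq w * ((E + S) / tot) | w <- pop].

Fixpoint pc_iter (Nobj : nat) (U : nat -> nat -> R) (w0 : seq R) (l : nat) : seq R :=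
  match l with
  | 0%N => w0
  | l'.+1 => pc_step Nobj 0 (U l') (pc_iter Nobj U w0 l')
  end.

End PopulationControl.

Definition mutually_independent {d} {T : measurableType d} {R : realType}
  (P : probability T R) {I : eqType} (X : I -> T -> R) : Prop :=
  forall (J : seq I) (A : I -> set R),
    uniq J -> (forall j, measurable (A j)) ->
    P (\bigcap_(j in [set j | j \in J]) (X j @^-1` A j))
    = (\prod_(j <- J) P (X j @^-1` A j))%E.

Definition uniform01 {d} {T : measurableType d} {R : realType}
  (P : probability T R) (X : T -> R) : Prop :=
  forall A : set R, measurable A ->
    P (X @^-1` A) = (@lebesgue_measure R) (A `&` `[0, 1]).

From HB Require Import structures.
From mathcomp Require Import all_boot all_order all_algebra.
From mathcomp Require Import all_classical all_reals all_analysis.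
From mathcomp Require Import ring lra zify.
Import Order.TTheory GRing.Theory Num.Theory.
Local Open Scope classical_set_scope.
Local Open Scope ring_scope.
Set Implicit Arguments. Unset Strict Implicit. Unset Printing Implicit Defensive.

(* With no source and total energy 1, the target weight is always [1/Nobj] and
   after one step all particles carry the same weight, so the population is
   described by its size alone, which never exceeds [2 Nobj + N^0].  From weights
   [w_p] a step keeps [sum_p floor (Nobj w_p)] particles plus one independent
   Bernoulli([frac (Nobj w_p)]) particle per [p]; the fractional parts add up
   to the missing number [K] and each is [< 1], so at least [K] of them are
   positive and the Bernoulli sum equals [K] -- the step lands on [Nobj] --
   with positive probability.  The uniform population of size [Nobj] is
   reproduced exactly, hence [P (N^(l+1) <> Nobj) <= c P (N^l <> Nobj)] where
   [c < 1] bounds the miss probability over the finitely many sizes. *)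

Section PoissonBinomial.
Variable R : realType.
Implicit Types rs : seq R.

Fixpoint poisson_binomial rs (k : nat) : R :=
  if rs is r :: rs' then
    poisson_binomial rs' k * (1 - r)
    + (if k is k'.+1 then poisson_binomial rs' k' * r else 0)
  else (k == 0)%:R.

Lemma poisson_binomial_ge0 rs k :
  all (fun r => 0 <= r <= 1) rs -> 0 <= poisson_binomial rs k.
Proof.
elim: rs k => [|r rs IH] k /=; first by rewrite ler0n.
case/andP=> /andP[r0 r1] /IH pb0; apply: addr_ge0.
  by apply: mulr_ge0; rewrite ?subr_ge0.
by case: k => [|k] //; apply: mulr_ge0.
Qed.

Lemma poisson_binomial_le1 rs k :
  all (fun r => 0 <= r <= 1) rs -> poisson_binomial rs k <= 1.
Proof.
elim: rs k => [|r rs IH] k /=; first by case: (k == 0%N); rewrite ?ler01.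
move=> /[dup] /andP[/andP[r0 r1] rs01] /= rrs01.
have b0 := poisson_binomial_ge0 k rs01; have b1 := IH k rs01.
case: k b0 b1 => [|k] b0 b1; first by nra.
have := poisson_binomial_ge0 k rs01; have := IH k rs01; nra.
Qed.

Lemma poisson_binomial_gt0 rs k : all (fun r => 0 <= r < 1) rs ->
  (k <= count (fun r => (0 < r)%R) rs)%N -> 0 < poisson_binomial rs k.
Proof.
have ge0 rs' k' : all (fun r => 0 <= r < 1) rs' -> 0 <= poisson_binomial rs' k'.
  move=> rs01; apply: poisson_binomial_ge0; by apply: sub_all rs01 => r /andP[-> /ltW ->].
elim: rs k => [|r rs IH] k /=; first by move=> _; rewrite leqn0 => /eqP ->; rewrite ltr01.
case/andP=> /andP[r0 r1] rs01.
have [rpos|] := ltrP 0 r; last first.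
  move=> r_le0 kc; have -> : r = 0 by lra.
  by rewrite subr0 mulr1; case: k kc => [|k] kc; rewrite ?mulr0 ?addr0 IH.
case: k => [|k] kc.
  by rewrite addr0; apply: mulr_gt0; [apply: IH | rewrite subr_gt0].
apply: ltr_wpDl; first by apply: mulr_ge0; rewrite ?ge0 ?subr_ge0 ?ltW.
by apply: mulr_gt0 => //; apply: IH.
Qed.

Lemma sum_le_count_gt0 rs : all (fun r => 0 <= r <= 1) rs ->
  \sum_(r <- rs) r <= (count (fun r => 0 < r) rs)%:R.
Proof.
elim: rs => [|r rs IH] /=; first by rewrite big_nil.
case/andP=> /andP[r0 r1] /IH; rewrite big_cons natrD.
by case: ltrP => rpos /=; lra.
Qed.

Lemma poisson_binomial_zeros rs : all (eq_op^~ 0) rs -> poisson_binomial rs 0 = 1.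
Proof. by elim: rs => [|r rs IH] //= /andP[/eqP -> /IH ->]; rewrite subr0 mulr1 addr0. Qed.

End PoissonBinomial.

Section RealProbability.
Variables (R : realType) (d : measure_display) (T : measurableType d).
Variable P : probability T R.
Implicit Types (A B E : set T).

Definition Pr A : R := fine (P A).

Lemma PrE A : measurable A -> P A = (Pr A)%:E.
Proof. by move=> mA; rewrite /Pr fineK ?fin_num_measure. Qed.

Lemma Pr_ge0 A : 0 <= Pr A.
Proof. exact/fine_ge0/measure_ge0. Qed.

Lemma Pr_le1 A : measurable A -> Pr A <= 1.
Proof. by move=> mA; rewrite -lee_fin -PrE ?probability_le1. Qed.

Lemma PrT : Pr setT = 1.
Proof. by rewrite /Pr probability_setT. Qed.

Lemma Pr0 : Pr set0 = 0.
Proof. by rewrite /Pr measure0. Qed.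

Lemma PrU A B : measurable A -> measurable B -> A `&` B = set0 ->
  Pr (A `|` B) = Pr A + Pr B.
Proof. by move=> mA mB AB0; rewrite /Pr measureU // fineD ?fin_num_measure. Qed.

Lemma PrC A : measurable A -> Pr (~` A) = 1 - Pr A.
Proof.
move=> mA; rewrite -PrT -(setUv A) PrU ?setICr //; [lra | exact: measurableC].
Qed.

Lemma le_Pr A B : measurable A -> measurable B -> A `<=` B -> Pr A <= Pr B.
Proof. by move=> mA mB AB; rewrite -lee_fin -!PrE // le_measure ?inE. Qed.

Lemma setI_fibers_cons (V : eqType) E (g : T -> V) n (s : seq V) :
  E `&` g @^-1` [set` n :: s] = E `&` g @^-1` [set n] `|` E `&` g @^-1` [set` s].
Proof.
rewrite -setIUr; congr (_ `&` _); apply/seteqP; split=> t /=; rewrite inE.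
  by case/orP=> [/eqP|]; [left | right].
by case=> [->|->]; rewrite ?eqxx ?orbT.
Qed.

Lemma setI_fibers_nil (V : eqType) E (g : T -> V) : E `&` g @^-1` [set` [::] : seq V] = set0.
Proof. by apply/seteqP; split=> t // [_]. Qed.

Lemma fibers_disjoint (V : eqType) E (g : T -> V) n (s : seq V) : n \notin s ->
  E `&` g @^-1` [set n] `&` (E `&` g @^-1` [set` s]) = set0.
Proof. by move=> ns; apply/seteqP; split=> t // [[_ /= gn] [_ /=]]; rewrite gn (negbTE ns). Qed.

Lemma measurable_fibers (V : eqType) E (g : T -> V) (s : seq V) :
  (forall n, n \in s -> measurable (E `&` g @^-1` [set n])) ->
  measurable (E `&` g @^-1` [set` s]).
Proof.
elim: s => [|n s IH] mF; first by rewrite setI_fibers_nil.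
rewrite setI_fibers_cons; apply: measurableU; first by apply: mF; rewrite inE eqxx.
by apply: IH => k ks; apply: mF; rewrite inE ks orbT.
Qed.

Lemma Pr_fibers (V : eqType) E (g : T -> V) (s : seq V) : uniq s ->
  (forall n, n \in s -> measurable (E `&` g @^-1` [set n])) ->
  Pr (E `&` g @^-1` [set` s]) = \sum_(n <- s) Pr (E `&` g @^-1` [set n]).
Proof.
elim: s => [|n s IH] /=; first by rewrite setI_fibers_nil big_nil Pr0.
case/andP=> ns us mF.
have mFs k : k \in s -> measurable (E `&` g @^-1` [set k]).
  by move=> ks; apply: mF; rewrite inE ks orbT.
rewrite setI_fibers_cons PrU ?fibers_disjoint ?big_cons ?IH //.
  by apply: mF; rewrite inE eqxx.
exact: measurable_fibers.
Qed.

End RealProbability.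

Section Independence.
Variables (R : realType) (d : measure_display) (T : measurableType d).
Variables (P : probability T R) (I : eqType) (X : I -> T -> R).
Hypothesis measurable_X : forall j, measurable_fun setT (X j).
Hypothesis indep_X : mutually_independent P X.
Local Notation Pr := (Pr P).
Implicit Types (D : pred I) (E : set T) (J : seq I) (A : I -> set R).

Lemma measurable_preimage j (B : set R) : measurable B -> measurable (X j @^-1` B).
Proof. by move=> mB; rewrite -[_ @^-1` _]setTI; exact: measurable_X. Qed.

Definition cylinder J A : set T := \bigcap_(j in [set j | j \in J]) X j @^-1` A j.

Lemma cylinder_nil A : cylinder [::] A = setT.
Proof. by apply/seteqP; split=> t //= _ j. Qed.

Lemma cylinder_cons j J A : cylinder (j :: J) A = X j @^-1` A j `&` cylinder J A.
Proof.
apply/seteqP; split=> t /=.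
  move=> Jt; split=> [|i /= iJ]; apply: Jt; by rewrite /= inE ?eqxx ?iJ ?orbT.
by move=> [jt Jt] i /=; rewrite inE => /orP[/eqP -> // | /Jt].
Qed.

Lemma eq_cylinder J A A' : {in J, A =1 A'} -> cylinder J A = cylinder J A'.
Proof.
by move=> AA'; apply/seteqP; split=> t Jt i /= iJ; [rewrite -AA' | rewrite AA'] => //; exact: Jt.
Qed.

Lemma measurable_cylinder J A : (forall j, measurable (A j)) -> measurable (cylinder J A).
Proof.
move=> mA; elim: J => [|j J IH]; first by rewrite cylinder_nil.
by rewrite cylinder_cons; apply: measurableI => //; exact: measurable_preimage.
Qed.

Lemma Pr_cylinder_cons j J A : uniq (j :: J) -> (forall j, measurable (A j)) ->
  Pr (cylinder (j :: J) A) = Pr (X j @^-1` A j) * Pr (cylinder J A).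
Proof.
move=> uJ mA; have /andP[_ uJ'] := uJ.
rewrite /Pr /cylinder (indep_X uJ mA) big_cons -(indep_X uJ' mA).
rewrite fineM //; apply: fin_num_measure.
  exact: measurable_preimage.
by rewrite -/(cylinder J A); exact: measurable_cylinder.
Qed.

(* [E] is independent of the variables [X j], [j \notin D].  For the events of
   the argument this replaces measurability with respect to the [X j], [j \in D],
   and needs no conditional expectation. *)
Definition indep_outside D E := measurable E /\
  forall J A, uniq J -> (forall j, measurable (A j)) -> all (predC D) J ->
    Pr (E `&` cylinder J A) = Pr E * Pr (cylinder J A).

Lemma sub_indep_outside D D' E : (forall j, D j -> D' j) ->
  indep_outside D E -> indep_outside D' E.
Proof.
move=> DD' [mE indE]; split=> // J A uJ mA JD'; apply: indE => //.
by apply: sub_all JD' => j /=; apply: contra; exact: DD'.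
Qed.

Lemma indep_outsideT D : indep_outside D setT.
Proof. by split=> // J A _ _ _; rewrite setTI PrT mul1r. Qed.

Lemma indep_outside0 D : indep_outside D set0.
Proof. by split=> // J A _ _ _; rewrite set0I Pr0 mul0r. Qed.

Lemma indep_outsideU D E1 E2 : E1 `&` E2 = set0 ->
  indep_outside D E1 -> indep_outside D E2 -> indep_outside D (E1 `|` E2).
Proof.
move=> E12 [mE1 indE1] [mE2 indE2]; split=> [|J A uJ mA JD]; first exact: measurableU.
have mJ := measurable_cylinder J mA.
rewrite setIUl !PrU ?indE1 ?indE2 ?mulrDl //; try exact: measurableI.
by rewrite setIACA E12 set0I.
Qed.

Lemma Pr_indep_outsideI_cylinder D E j B J A :
  indep_outside D E -> ~~ D j -> measurable B -> uniq J ->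
  (forall j, measurable (A j)) -> all (predC [pred i | D i || (i == j)]) J ->
  Pr (E `&` X j @^-1` B `&` cylinder J A) =
  Pr E * Pr (X j @^-1` B) * Pr (cylinder J A).
Proof.
move=> [_ indE] Dj mB uJ mA JD.
pose A' i := if i == j then B else A i.
have mA' i : measurable (A' i) by rewrite /A'; case: ifP.
have jJ : j \notin J by apply/negP => /(allP JD) /=; rewrite eqxx orbT.
have A'J : cylinder J A' = cylinder J A.
  by apply: eq_cylinder => i iJ; rewrite /A'; case: eqP => // ij; rewrite -ij iJ in jJ.
have jJD : all (predC D) (j :: J).
  by rewrite /= Dj; apply: sub_all JD => i /=; rewrite negb_or => /andP[].
have ujJ : uniq (j :: J) by rewrite /= jJ.
have := indE _ _ ujJ mA' jJD.
rewrite Pr_cylinder_cons // cylinder_cons A'J setIA /A' eqxx => ->.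
by rewrite mulrA.
Qed.

Lemma Pr_indep_outsideI D E j B : indep_outside D E -> ~~ D j -> measurable B ->
  Pr (E `&` X j @^-1` B) = Pr E * Pr (X j @^-1` B).
Proof.
move=> indE Dj mB.
have := Pr_indep_outsideI_cylinder (A := fun=> setT) indE Dj mB (isT : uniq [::])
  (fun=> measurableT) isT.
by rewrite cylinder_nil setIT PrT mulr1.
Qed.

Lemma indep_outsideI D E j B : indep_outside D E -> ~~ D j -> measurable B ->
  indep_outside [pred i | D i || (i == j)] (E `&` X j @^-1` B).
Proof.
move=> indE Dj mB; split=> [|J A uJ mA JD].
  by apply: measurableI; [case: indE | exact: measurable_preimage].
by rewrite (Pr_indep_outsideI_cylinder indE) // (Pr_indep_outsideI indE).
Qed.

Lemma indep_outside_fibers (V : eqType) D E (g : T -> V) (s : seq V) : uniq s ->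
  (forall n, n \in s -> indep_outside D (E `&` g @^-1` [set n])) ->
  indep_outside D (E `&` g @^-1` [set` s]).
Proof.
elim: s => [|n s IH] /=; first by rewrite setI_fibers_nil => _ _; exact: indep_outside0.
case/andP=> ns us indF; rewrite setI_fibers_cons.
apply: indep_outsideU; first exact: fibers_disjoint.
  by apply: indF; rewrite inE eqxx.
by apply: IH => // k ks; apply: indF; rewrite inE ks orbT.
Qed.

Section Successes.
Variable bit : I -> R -> bool.
Hypothesis measurable_bit : forall j, measurable [set u | bit j u].

Definition successes (js : seq I) (t : T) : nat := \sum_(j <- js) bit j (X j t).

Definition success_probs (js : seq I) : seq R :=
  [seq Pr (X j @^-1` [set u | bit j u]) | j <- js].

Lemma successes_le_size js t : (successes js t <= size js)%N.
Proof.
rewrite /successes; elim: js => [|j js IH]; first by rewrite big_nil.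
by rewrite big_cons; exact: leq_add (leq_b1 _) IH.
Qed.

Lemma successes_cons_fiber E j js k :
  E `&` successes (j :: js) @^-1` [set k] =
  E `&` successes js @^-1` [set k] `&` X j @^-1` (~` [set u | bit j u]) `|`
  (if k is k'.+1 then E `&` successes js @^-1` [set k'] `&` X j @^-1` [set u | bit j u]
   else set0).
Proof.
apply/seteqP; split=> t /=; rewrite /successes big_cons.
  case=> Et; case Hb: (bit j (X j t)) => /= <-; last by left; rewrite add0n.
  by right; rewrite add1n; split.
case=> [[[Et <-] /negP/negbTE ->] // | ].
by case: k => // k [[Et <-] ->]; rewrite add1n.
Qed.

Lemma successes_law D E js k : uniq js -> all (predC D) js -> indep_outside D E ->
  indep_outside [pred j | D j || (j \in js)] (E `&` successes js @^-1` [set k]) /\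
  Pr (E `&` successes js @^-1` [set k]) = Pr E * poisson_binomial (success_probs js) k.
Proof.
move=> + + indE; elim: js k => [|j js IH] k /=.
  have -> : E `&` successes [::] @^-1` [set k] = if k is 0 then E else set0.
    by case: k => [|k]; apply/seteqP; split=> t /=; rewrite /successes big_nil //; case.
  case: k => [|k] _ _; rewrite /= ?mulr1 ?mulr0 ?Pr0; last by split=> //; exact: indep_outside0.
  by split=> //; apply: sub_indep_outside indE => i /= ->.
case/andP=> jjs ujs /andP[Dj jsD].
have D'j : ~~ [pred i | D i || (i \in js)] j by rewrite /= negb_or Dj.
have sub_cons i : (D i || (i \in js)) || (i == j) -> D i || (i \in j :: js).
  by rewrite inE => /orP[/orP[->|->]|->]; rewrite ?orbT.
have mS := measurable_bit j; have mSC := measurableC mS.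
have PrSC : Pr (X j @^-1` ~` [set u | bit j u]) = 1 - Pr (X j @^-1` [set u | bit j u]).
  by rewrite preimage_setC PrC //; exact: (measurable_preimage j mS).
have [indk Prk] := IH k ujs jsD.
have [indkC PrkC] := (indep_outsideI indk D'j mSC, Pr_indep_outsideI indk D'j mSC).
rewrite successes_cons_fiber; case: k indk Prk indkC PrkC => [|k] indk Prk indkC PrkC.
  rewrite setU0 PrkC Prk PrSC addr0 mulrA; split=> //.
  exact: sub_indep_outside sub_cons indkC.
have [indk' Prk'] := IH k ujs jsD.
have [indkS PrkS] := (indep_outsideI indk' D'j mS, Pr_indep_outsideI indk' D'j mS).
have disj : E `&` successes js @^-1` [set k.+1] `&` X j @^-1` (~` [set u | bit j u]) `&`
    (E `&` successes js @^-1` [set k] `&` X j @^-1` [set u | bit j u]) = set0.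
  by apply/seteqP; split=> t // [[_ /= nS] [_ /= S]].
split; first by apply: indep_outsideU disj _ _; exact: sub_indep_outside sub_cons _.
rewrite PrU ?PrkC ?PrkS ?Prk ?Prk' ?PrSC /=; [ring | by case: indkC | by case: indkS | by []].
Qed.

Lemma indep_outside_successes D E js (B : set nat) :
  uniq js -> all (predC D) js -> indep_outside D E ->
  indep_outside [pred j | D j || (j \in js)] (E `&` successes js @^-1` B).
Proof.
move=> ujs jsD indE.
have -> : E `&` successes js @^-1` B =
    E `&` successes js @^-1` B `&` successes js @^-1` [set` iota 0 (size js).+1].
  apply/seteqP; split=> [t EBt | t []//]; split=> //.
  by rewrite /preimage /mkset mem_iota add0n ltnS successes_le_size.
apply: indep_outside_fibers; first exact: iota_uniq.
move=> n _; have [Bn|nBn] := pselect (B n).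
  have -> : E `&` successes js @^-1` B `&` successes js @^-1` [set n] =
      E `&` successes js @^-1` [set n].
    by apply/seteqP; split=> t /= => [[[Et _] tn] | [Et tn]] //; rewrite tn.
  exact: (successes_law n ujs jsD indE).1.
have -> : E `&` successes js @^-1` B `&` successes js @^-1` [set n] = set0.
  by apply/seteqP; split=> t // [[_ /= Bt] tn]; rewrite /= tn in Bt.
exact: indep_outside0.
Qed.

Lemma Pr_successes_neq D E js k : uniq js -> all (predC D) js -> indep_outside D E ->
  Pr (E `&` successes js @^-1` [set n | n != k]) =
  Pr E * (1 - poisson_binomial (success_probs js) k).
Proof.
move=> ujs jsD indE.
have [[mk _] Prk] := successes_law k ujs jsD indE.
have [mnk _] := indep_outside_successes [set n | n != k] ujs jsD indE.
have : Pr E = Pr (E `&` successes js @^-1` [set k]) +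
              Pr (E `&` successes js @^-1` [set n | n != k]).
  rewrite -PrU //; last by apply/seteqP; split=> t // [[_ /= ->] [_ /=]]; rewrite eqxx.
  rewrite -setIUr (_ : _ `|` _ = setT) ?setIT //.
  by apply/seteqP; split=> t // _; have [e|ne] := eqVneq (successes js t) k; [left | right].
by rewrite Prk mulrBr mulr1; lra.
Qed.

End Successes.
End Independence.

Lemma measurable_set_le (R : realType) (r : R) : measurable [set u : R | u <= r].
Proof.
rewrite (_ : [set u | u <= r] = [set` `]-oo, r]]); first exact: measurable_itv.
by apply/seteqP; split=> u; rewrite /= in_itv.
Qed.

Lemma measurable_set_lt (R : realType) (r : R) : measurable [set u : R | u < r].
Proof.
rewrite (_ : [set u | u < r] = [set` `]-oo, r[]); first exact: measurable_itv.
by apply/seteqP; split=> u; rewrite /= in_itv.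
Qed.

Section UniformLaw.
Variables (R : realType) (d : measure_display) (T : measurableType d).
Variables (P : probability T R) (V : T -> R).
Hypothesis uniform_V : uniform01 P V.

Lemma Pr_uniform01_le r : 0 <= r <= 1 -> Pr P (V @^-1` [set u | u <= r]) = r.
Proof.
move=> /andP[r0 r1]; rewrite /Pr uniform_V; last exact: measurable_set_le.
rewrite (_ : _ `&` _ = [set` `[0, r]]).
  rewrite lebesgue_measure_itv /= lte_fin; case: ltP => [_|]; first by rewrite oppr0 adde0.
  by case: (r =P 0) => [->|]; [|lra].
apply/seteqP; split=> u /=; rewrite !in_itv /=; first by case=> ur /andP[-> _].
by move=> /andP[u0 ur]; rewrite u0 ur; split=> //; lra.
Qed.

Lemma Pr_uniform01_lt r : 0 <= r <= 1 -> Pr P (V @^-1` [set u | u < r]) = r.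
Proof.
move=> /andP[r0 r1]; rewrite /Pr uniform_V; last exact: measurable_set_lt.
rewrite (_ : _ `&` _ = [set` `[0, r[]).
  rewrite lebesgue_measure_itv /= lte_fin; case: ltP => [_|]; first by rewrite oppr0 adde0.
  by case: (r =P 0) => [->|]; [|lra].
apply/seteqP; split=> u /=; rewrite !in_itv /=; first by case=> ur /andP[-> _].
by move=> /andP[u0 ur]; rewrite u0 ur; split=> //; lra.
Qed.

End UniformLaw.

Section ParticleTreatment.
Variable R : realType.
Implicit Types wobj w u : R.

Definition pc_int wobj w : nat := Num.truncn (w / wobj).
Definition pc_frac wobj w : R := w / wobj - (pc_int wobj w)%:R.
Definition pc_bit wobj w u : bool :=
  if pc_int wobj w == 0%N then u <= pc_frac wobj w else u < pc_frac wobj w.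

Lemma pc_particleE wobj w u :
  pc_particle wobj w u = nseq (pc_int wobj w + pc_bit wobj w u) wobj.
Proof.
rewrite /pc_particle /pc_bit /pc_frac /pc_int; case: eqP => [-> | //].
by rewrite ltNge; case: (u <= _).
Qed.

Lemma pc_frac_itv wobj w : 0 < wobj -> 0 <= w -> 0 <= pc_frac wobj w < 1.
Proof.
move=> wobj_gt0 w_ge0; have /andP[lo hi] := truncn_itv (divr_ge0 w_ge0 (ltW wobj_gt0)).
by rewrite subr_ge0 lo ltrBlDl natr1.
Qed.

Lemma measurable_pc_bit wobj w : measurable [set u | pc_bit wobj w u].
Proof.
by rewrite /pc_bit; case: eqP => _; [exact: measurable_set_le | exact: measurable_set_lt].
Qed.

Lemma Pr_pc_bit d (T : measurableType d) (P : probability T R) (V : T -> R) wobj w :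
  uniform01 P V -> 0 < wobj -> 0 <= w ->
  Pr P (V @^-1` [set u | pc_bit wobj w u]) = pc_frac wobj w.
Proof.
move=> uV wobj_gt0 w_ge0; have /andP[f0 /ltW f1] := pc_frac_itv wobj_gt0 w_ge0.
by rewrite /pc_bit; case: eqP => _; [apply: Pr_uniform01_le | apply: Pr_uniform01_lt];
  rewrite ?f0 ?f1.
Qed.

End ParticleTreatment.

Section NormalizedPopulations.
Variable R : realType.
Implicit Types ws : seq R.

Definition normalized ws := \sum_(w <- ws) w = 1 /\ all (fun w => 0 <= w) ws.

Definition uniform_pop (n : nat) : seq R := nseq n n%:R^-1.

Lemma normalized_uniform_pop n : (0 < n)%N -> normalized (uniform_pop n).
Proof.
move=> n_gt0; split; last by rewrite all_nseq invr_ge0 ler0n orbT.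
by rewrite big_nseq iter_addr_0 -[_ *+ n]mulr_natr mulVf // pnatr_eq0 -lt0n.
Qed.

Lemma flatten_map_nseq (I T : Type) (s : seq I) (f : I -> nat) (x : T) :
  flatten [seq nseq (f i) x | i <- s] = nseq (\sum_(i <- s) f i) x.
Proof. by elim: s => [|i s IH]; rewrite ?big_nil ?big_cons //= IH nseqD. Qed.

Variable Nobj : nat.
Hypothesis Nobj_gt0 : (0 < Nobj)%N.
Local Notation wobj := (Nobj%:R^-1 : R).

Definition int_total ws : nat := \sum_(w <- ws) pc_int wobj w.

Definition bit_total ws (u : nat -> R) : nat :=
  \sum_(p <- iota 0 (size ws)) pc_bit wobj (nth 0%R ws p) (u p).

Definition hit_prob ws : R :=
  poisson_binomial [seq pc_frac wobj w | w <- ws] (Nobj - int_total ws).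

Lemma wobj_gt0 : 0 < wobj.
Proof. by rewrite invr_gt0 ltr0n. Qed.

Lemma pc_step_normalized u ws : \sum_(w <- ws) w = 1 ->
  pc_step Nobj 0 u ws = uniform_pop (maxn 1 (int_total ws + bit_total ws u)).
Proof.
move=> ws1; rewrite /pc_step ws1 ltxx ltr01 eqxx addr0 mul1r /=.
set n := (int_total ws + bit_total ws u)%N.
have -> : flatten [seq pc_particle wobj (nth 0 ws p) (u p) | p <- iota 0 (size ws)] =
    nseq n wobj.
  rewrite (eq_map (fun p => pc_particleE _ _ _)) flatten_map_nseq big_split /=.
  by congr (nseq (_ + _) _); rewrite /int_total [RHS](big_nth 0) /index_iota subn0.
have [->|n_gt0] := posnP n; first by rewrite /= /uniform_pop /= invr1.
have /negbTE -> : nseq n wobj != [::] by rewrite -size_eq0 size_nseq -lt0n.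
rewrite (maxn_idPr n_gt0) /uniform_pop map_nseq big_nseq iter_addr_0 -[_ *+ n]mulr_natr.
congr nseq; field.
by rewrite !pnatr_eq0 -!lt0n n_gt0 Nobj_gt0.
Qed.

Lemma sum_pc_frac ws : \sum_(w <- ws) w = 1 ->
  \sum_(w <- ws) pc_frac wobj w = Nobj%:R - (int_total ws)%:R.
Proof. by move=> ws1; rewrite /pc_frac sumrB /int_total natr_sum invrK -mulr_suml ws1 mul1r. Qed.

Lemma int_total_le ws : normalized ws -> (int_total ws <= Nobj)%N.
Proof.
move=> [ws1 ws_ge0]; rewrite -(ler_nat R) -subr_ge0 -sum_pc_frac // big_seq.
by apply: sumr_ge0 => w /(allP ws_ge0) /(pc_frac_itv wobj_gt0) /andP[].
Qed.

Lemma pc_frac_all_itv ws : normalized ws ->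
  all (fun r => 0 <= r < 1) [seq pc_frac wobj w | w <- ws].
Proof.
by move=> [_ ws_ge0]; rewrite all_map; apply: sub_all ws_ge0 => w /(pc_frac_itv wobj_gt0).
Qed.

Lemma hit_prob_gt0 ws : normalized ws -> 0 < hit_prob ws.
Proof.
move=> ws_norm; have fr01 := pc_frac_all_itv ws_norm.
apply: poisson_binomial_gt0 => //; rewrite -(ler_nat R) natrB ?int_total_le //.
rewrite -sum_pc_frac; last by case: ws_norm.
apply: le_trans (sum_le_count_gt0 _); first by rewrite big_map.
by apply: sub_all fr01 => r /andP[-> /ltW ->].
Qed.

Lemma hit_prob_le1 ws : normalized ws -> hit_prob ws <= 1.
Proof.
move=> /pc_frac_all_itv fr01; apply: poisson_binomial_le1.
by apply: sub_all fr01 => r /andP[-> /ltW ->].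
Qed.

Lemma hit_prob_uniform_target : hit_prob (uniform_pop Nobj) = 1.
Proof.
have int1 : pc_int wobj wobj = 1%N.
  by rewrite /pc_int divff ?truncn1 // invr_eq0 pnatr_eq0 -lt0n.
rewrite /hit_prob /int_total /uniform_pop big_nseq iter_addn_0 int1 mul1n subnn.
rewrite poisson_binomial_zeros // map_nseq all_nseq /pc_frac int1 divff ?subrr ?eqxx ?orbT //.
by rewrite invr_eq0 pnatr_eq0 -lt0n.
Qed.

Lemma bit_total_le ws u : (bit_total ws u <= size ws)%N.
Proof.
rewrite /bit_total -[X in (_ <= X)%N](size_iota 0) -(sum1_size (iota 0 _)).
by apply: leq_sum => p _; exact: leq_b1.
Qed.

Lemma offspring_le ws u : normalized ws ->
  (int_total ws + bit_total ws u <= Nobj + size ws)%N.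
Proof. by move=> ws_norm; rewrite leq_add ?int_total_le ?bit_total_le. Qed.

Lemma offspring_uniform_pop_le n u : (0 < n)%N ->
  (int_total (uniform_pop n) + bit_total (uniform_pop n) u <= maxn n (2 * Nobj))%N.
Proof.
move=> n_gt0; have := int_total_le (normalized_uniform_pop n_gt0).
have := bit_total_le (uniform_pop n) u; rewrite size_nseq.
rewrite /int_total big_nseq iter_addn_0.
case: (posnP (pc_int wobj n%:R^-1)) => [-> | I_gt0]; first by lia.
have : (n <= pc_int wobj n%:R^-1 * n)%N by rewrite leq_pmull.
by lia.
Qed.

End NormalizedPopulations.

Arguments uniform_pop {R} n.

Lemma prodr_le_factor (R : numDomainType) (I : eqType) (s : seq I) (f : I -> R) i :
  uniq s -> i \in s -> (forall j, j \in s -> 0 <= f j <= 1) -> \prod_(j <- s) f j <= f i.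
Proof.
move=> s_uniq i_s f01; rewrite (bigD1_seq i) //=; apply: ler_piMr; first by case/andP: (f01 i i_s).
by rewrite big_seq_cond; apply: prodr_ile1 => j /andP[/f01].
Qed.

Section Iteration.
Variables (R : realType) (Nobj : nat) (w0 : seq R).
Hypotheses (Nobj_gt0 : (0 < Nobj)%N) (w0_gt0 : (0 < size w0)%N).
Hypothesis normalized_w0 : normalized w0.
Variable uu : nat -> nat -> R.
Local Notation pop := (pc_iter Nobj uu w0).

Definition pop_bound : nat := 2 * Nobj + size w0.

Definition state_pop (l n : nat) : seq R := if l is 0 then w0 else uniform_pop n.

Lemma normalized_state_pop l n : (0 < n)%N -> normalized (state_pop l n).
Proof. by case: l => // l; exact: normalized_uniform_pop. Qed.

Lemma normalized_pc_iter l : normalized (pop l).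
Proof.
elim: l => [//|l [sum1 _]] /=; rewrite pc_step_normalized //.
exact/normalized_uniform_pop/leq_maxl.
Qed.

Lemma pc_iterS l :
  pop l.+1 = uniform_pop (maxn 1 (int_total Nobj (pop l) + bit_total Nobj (pop l) (uu l))%N).
Proof. by rewrite /= pc_step_normalized //; case: (normalized_pc_iter l). Qed.

Lemma pc_iterE l : pop l = state_pop l (size (pop l)).
Proof. by case: l => [//|l]; rewrite pc_iterS /= size_nseq. Qed.

Lemma size_pc_iter_bound l : (0 < size (pop l) <= pop_bound)%N.
Proof.
elim: l => [|l IH]; first by rewrite w0_gt0 /pop_bound leq_addl.
rewrite pc_iterS size_nseq leq_maxl geq_max /pop_bound /=.
case: l IH => [|l] IH.
  by have := offspring_le Nobj_gt0 (uu 0) normalized_w0; rewrite /=; lia.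
rewrite [pop l.+1]pc_iterE; move: IH; set n := size _ => /andP[n_gt0 n_le] /=.
by have := offspring_uniform_pop_le Nobj_gt0 (uu l.+1) n_gt0; rewrite /pop_bound in n_le; lia.
Qed.

Local Notation hit_uniform n := (hit_prob Nobj (@uniform_pop R n)).

(* The product bounds every hit probability from below; halving it keeps the rate
   positive. *)
Definition decay_rate : R :=
  1 - hit_prob Nobj w0 * \prod_(n <- iota 1 pop_bound) hit_uniform n / 2.

Lemma hit_uniform_itv n : n \in iota 1 pop_bound -> 0 < hit_uniform n <= 1.
Proof.
rewrite mem_iota => /andP[n_gt0 _]; have n_norm := normalized_uniform_pop R n_gt0.
by rewrite hit_prob_gt0 ?hit_prob_le1.
Qed.

Lemma hit_prod_itv : 0 < \prod_(n <- iota 1 pop_bound) hit_uniform n <= 1.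
Proof.
apply/andP; split; rewrite big_seq; [apply: prodr_gt0 | apply: prodr_ile1];
  by move=> n /hit_uniform_itv /andP[h_gt0 h_le1]; rewrite ?h_gt0 ?h_le1 ?(ltW h_gt0).
Qed.

Lemma decay_rate_itv : 0 < decay_rate < 1.
Proof.
have [h0_gt0 h0_le1] := (hit_prob_gt0 Nobj_gt0 normalized_w0, hit_prob_le1 Nobj_gt0 normalized_w0).
have /andP[prod_gt0 prod_le1] := hit_prod_itv.
by rewrite /decay_rate; apply/andP; split; nra.
Qed.

Lemma hit_prob_decay_rate l n : n \in iota 1 pop_bound ->
  1 - hit_prob Nobj (state_pop l n) <= decay_rate.
Proof.
move=> n_range.
have [h0_gt0 h0_le1] := (hit_prob_gt0 Nobj_gt0 normalized_w0, hit_prob_le1 Nobj_gt0 normalized_w0).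
have /andP[prod_gt0 prod_le1] := hit_prod_itv.
have prod_le : \prod_(m <- iota 1 pop_bound) hit_uniform m <= hit_uniform n.
  apply: prodr_le_factor => [|//|m /hit_uniform_itv /andP[h_gt0 ->]]; last by rewrite (ltW h_gt0).
  exact: iota_uniq.
by rewrite /decay_rate; case: l => [|l] /=; nra.
Qed.

End Iteration.

Arguments decay_rate {R}.

Section Convergence.
Variables (R : realType) (d : measure_display) (T : measurableType d).
Variables (P : probability T R) (U : nat -> nat -> T -> R) (Nobj : nat) (w0 : seq R).
Hypotheses (Nobj_gt0 : (0 < Nobj)%N) (w0_gt0 : (0 < size w0)%N).
Hypothesis normalized_w0 : normalized w0.
Hypothesis measurable_U : forall l p, measurable_fun setT (U l p).
Hypothesis uniform_U : forall l p, uniform01 P (U l p).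
Hypothesis indep_U : mutually_independent P (fun j : nat * nat => U j.1 j.2).

Local Notation X := (fun j : nat * nat => U j.1 j.2).
Local Notation Pr := (Pr P).
Local Notation M := (pop_bound Nobj w0).
Local Notation past l := [pred j : nat * nat | (j.1 < l)%N].

Let measurable_X : forall j, measurable_fun setT (X j) := fun j => measurable_U j.1 j.2.

Definition pop_size (l : nat) (t : T) : nat :=
  size (pc_iter Nobj (fun l' p => U l' p t) w0 l).

Definition level_bit (ws : seq R) (j : nat * nat) (u : R) : bool :=
  pc_bit Nobj%:R^-1 (nth 0 ws j.2) u.

Definition level (l : nat) (ws : seq R) : seq (nat * nat) :=
  [seq (l, p) | p <- iota 0 (size ws)].

Local Notation level_successes l ws := (successes X (level_bit ws) (level l ws)).

Lemma measurable_level_bit ws j : measurable [set u | level_bit ws j u].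
Proof. exact: measurable_pc_bit. Qed.

Lemma uniq_level l ws : uniq (level l ws).
Proof. by rewrite map_inj_uniq ?iota_uniq // => p q []. Qed.

Lemma level_outside_past l ws : all (predC (past l)) (level l ws).
Proof. by apply/allP => j /mapP[p _ ->] /=; rewrite ltnn. Qed.

Lemma past_level_sub l ws j : past l j || (j \in level l ws) -> past l.+1 j.
Proof. by case/orP => [/= /ltnW // | /mapP[p _ ->] /=]. Qed.

Lemma success_probs_level l ws : normalized ws ->
  success_probs P X (level_bit ws) (level l ws) = [seq pc_frac Nobj%:R^-1 w | w <- ws].
Proof.
move=> [_ ws_ge0]; rewrite /success_probs -map_comp -[in RHS](mkseq_nth 0 ws) -map_comp.
apply/eq_in_map => p; rewrite mem_iota add0n => /andP[_ p_lt] /=.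
apply: Pr_pc_bit; [exact: uniform_U | exact: wobj_gt0 | exact: (allP ws_ge0) _ (mem_nth 0 p_lt)].
Qed.

Lemma pop_size_range l t : pop_size l t \in iota 1 M.
Proof. by rewrite mem_iota add1n ltnS; apply: size_pc_iter_bound. Qed.

Lemma setI_pop_size_range A l : A `&` pop_size l @^-1` [set` iota 1 M] = A.
Proof. by apply/seteqP; split=> [t []//|t At]; split=> //; exact: pop_size_range. Qed.

Lemma pop_size_succ l t :
  pop_size l.+1 t = maxn 1 (int_total Nobj (state_pop w0 l (pop_size l t)) +
                            level_successes l (state_pop w0 l (pop_size l t)) t)%N.
Proof.
rewrite /pop_size pc_iterS // size_nseq -pc_iterE //.
by rewrite /successes /level big_map.
Qed.

Lemma pop_size_succ_fiber l n (B : set nat) :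
  pop_size l.+1 @^-1` B `&` pop_size l @^-1` [set n] =
  pop_size l @^-1` [set n] `&` level_successes l (state_pop w0 l n) @^-1`
    [set k | B (maxn 1 (int_total Nobj (state_pop w0 l n) + k)%N)].
Proof.
apply/seteqP; split=> t /=; rewrite pop_size_succ.
  by move=> [Bt tn]; rewrite tn in Bt.
by move=> [tn Bt]; rewrite tn.
Qed.

Lemma indep_pop_size l (B : set nat) : indep_outside P X (past l) (pop_size l @^-1` B).
Proof.
elim: l B => [|l IH] B.
  have [Bw0|nBw0] := pselect (B (size w0)).
    rewrite (_ : pop_size 0 @^-1` B = setT); first exact: indep_outsideT.
    by apply/seteqP; split.
  rewrite (_ : pop_size 0 @^-1` B = set0); first exact: indep_outside0.
  by apply/seteqP; split.
rewrite -(setI_pop_size_range (pop_size l.+1 @^-1` B) l).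
apply: (indep_outside_fibers measurable_X); first exact: iota_uniq.
move=> n _; rewrite pop_size_succ_fiber.
set ws := state_pop w0 l n.
have := indep_outside_successes measurable_X indep_U (measurable_level_bit ws)
  [set k | B (maxn 1 (int_total Nobj ws + k)%N)]
  (uniq_level l ws) (level_outside_past l ws) (IH [set n]).
by apply: sub_indep_outside => j; exact: past_level_sub.
Qed.

Lemma measurable_pop_size l (B : set nat) : measurable (pop_size l @^-1` B).
Proof. by case: (indep_pop_size l B). Qed.

Lemma Pr_pop_size_succ_neq l :
  Pr (pop_size l.+1 @^-1` [set k | k != Nobj]) <=
  \sum_(n <- iota 1 M) Pr (pop_size l @^-1` [set n]) * (1 - hit_prob Nobj (state_pop w0 l n)).
Proof.
rewrite -(setI_pop_size_range (pop_size l.+1 @^-1` _) l) Pr_fibers ?iota_uniq //; last first.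
  by move=> n _; apply: measurableI; exact: measurable_pop_size.
rewrite big_seq [leRHS]big_seq; apply: ler_sum => n; rewrite mem_iota => /andP[n_gt0 _].
set ws := state_pop w0 l n; have ws_norm : normalized ws by exact: normalized_state_pop.
rewrite /hit_prob -(success_probs_level l ws_norm).
have fiber_indep B := indep_outside_successes measurable_X indep_U (measurable_level_bit ws)
  B (uniq_level l ws) (level_outside_past l ws) (indep_pop_size l [set n]).
rewrite -(Pr_successes_neq measurable_X indep_U (measurable_level_bit ws) _
  (uniq_level l ws) (level_outside_past l ws) (indep_pop_size l [set n])).
rewrite pop_size_succ_fiber -/ws; apply: le_Pr.
- by case: (fiber_indep [set k | maxn 1 (int_total Nobj ws + k)%N != Nobj]).
- by case: (fiber_indep [set k | k != (Nobj - int_total Nobj ws)%N]).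
move=> t [tn /= hit_neq]; split=> //=; apply: contra_neq hit_neq => ->.
by rewrite subnKC ?int_total_le // (maxn_idPr Nobj_gt0).
Qed.

(* Before the first step a population of size [Nobj] need not have equal weights. *)
Definition unsettled (l : nat) : set nat := if l is 0 then setT else [set k | k != Nobj].

Lemma Pr_pop_size_succ_neq_le l :
  Pr (pop_size l.+1 @^-1` [set k | k != Nobj]) <=
  decay_rate Nobj w0 * Pr (pop_size l @^-1` unsettled l).
Proof.
have /andP[c_gt0 _] := decay_rate_itv Nobj_gt0 normalized_w0.
apply: le_trans (Pr_pop_size_succ_neq l) _.
rewrite -(setI_pop_size_range (pop_size l @^-1` unsettled l) l) Pr_fibers ?iota_uniq //; last first.
  by move=> n _; apply: measurableI; exact: measurable_pop_size.
rewrite mulr_sumr big_seq [leRHS]big_seq; apply: ler_sum => n n_range.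
have hit_le := hit_prob_decay_rate Nobj_gt0 normalized_w0 l n_range.
have fiberE : unsettled l n ->
    pop_size l @^-1` unsettled l `&` pop_size l @^-1` [set n] = pop_size l @^-1` [set n].
  by move=> Un; apply/seteqP; split=> [t []//|t /= tn]; rewrite tn.
case: l fiberE hit_le => [|l] fiberE hit_le.
  by rewrite fiberE // mulrC ler_wpM2r ?Pr_ge0.
have [nN|nN] := eqVneq n Nobj.
  rewrite nN /= (hit_prob_uniform_target R Nobj_gt0) subrr mulr0.
  by apply: mulr_ge0; [exact: ltW | exact: Pr_ge0].
by rewrite fiberE // mulrC ler_wpM2r ?Pr_ge0.
Qed.

Lemma Pr_pop_size_neq_le l :
  Pr (pop_size l @^-1` [set k | k != Nobj]) <= decay_rate Nobj w0 ^+ l.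
Proof.
have /andP[c_gt0 _] := decay_rate_itv Nobj_gt0 normalized_w0.
elim: l => [|l IH]; first by rewrite expr0; apply: Pr_le1; exact: measurable_pop_size.
apply: le_trans (Pr_pop_size_succ_neq_le l) _; rewrite exprS ler_pM2l //.
by case: l IH => [|l] IH //=; rewrite preimage_setT PrT expr0.
Qed.

End Convergence.

Theorem proposition1 (R : realType) (d : measure_display) (T : measurableType d)
  (P : probability T R) (U : nat -> nat -> T -> R)
  (Nobj : nat) (w0 : seq R) :
  (0 < Nobj)%N ->
  (0 < size w0)%N ->
  all (fun w => 0 < w) w0 ->
  \sum_(w <- w0) w = 1 ->
  (forall l p, measurable_fun setT (U l p)) ->
  (forall l p, uniform01 P (U l p)) ->
  mutually_independent P (fun ij : nat * nat => U ij.1 ij.2) ->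
  exists lambda : R, 0 < lambda /\
    forall l : nat,
      (P [set t | size (pc_iter Nobj (fun l' p => U l' p t) w0 l) != Nobj]
      <= (expR (- (l%:R * lambda)))%:E)%E.
Proof.
move=> Nobj_gt0 w0_gt0 w0_pos w0_sum1 measurable_U uniform_U indep_U.
have w0_norm : normalized w0 by split=> //; apply: sub_all w0_pos => w /ltW.
have /andP[c_gt0 c_lt1] := decay_rate_itv Nobj_gt0 w0_norm.
exists (- ln (decay_rate Nobj w0)); split; first by rewrite oppr_gt0 ln_lt0 ?c_gt0.
move=> l; have := measurable_pop_size Nobj_gt0 w0_gt0 w0_norm measurable_U indep_U l
  [set k | k != Nobj].
move/(PrE P) => ->; rewrite lee_fin mulrN opprK expRM_natl lnK ?posrE //.
exact: Pr_pop_size_neq_le.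
Qed.
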